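(* Let $k\ge 0$ be an integer. A finite nonempty subset $\sigma\subseteq\mathbb{Z}^2$ is a simplex of $\mathrm{VR}(\mathbb{Z}^2;k)$ if and only if $\bigcap_{v\in\sigma}B_{\mathbb{R}^2}(v,\tfrac{k+1}{2})\neq\emptyset$.
   Context: $\mathbb{Z}^2$ and $\mathbb{R}^2$ carry the $l^1$ metric $d((x,y),(x',y'))=|x-x'|+|y-y'|$, and $B_{\mathbb{R}^2}(v,r)=\{p\in\mathbb{R}^2: d(p,v)< r\}$ is the open $l^1$ ball. $\mathrm{VR}(X;r)$ is the simplicial complex on vertex set $X$ whose simplices are the finite nonempty subsets of diameter at most $r$. *)

From Stdlib Require Import ZArith Reals List.
Open Scope R_scope.

Definition dZ (p q : Z * Z) : Z :=
  (Z.abs (fst p - fst q) + Z.abs (snd p - snd q))%Z.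

Definition dR (p q : R * R) : R :=
  Rabs (fst p - fst q) + Rabs (snd p - snd q).

Definition ZZtoRR (v : Z * Z) : R * R := (IZR (fst v), IZR (snd v)).

Definition ballR2 (c : R * R) (r : R) (p : R * R) : Prop := dR p c < r.

(* A finite nonempty subset sigma of Z^2 (given by a nonempty list of its
   elements) is a simplex of VR(Z^2; r) iff its diameter is at most r. *)
Definition is_VR_simplex (r : R) (sigma : list (Z * Z)) : Prop :=
  sigma <> nil /\
  forall u v, In u sigma -> In v sigma -> IZR (dZ u v) <= r.

(* In the coordinates s = x + y, t = x - y the l^1 distance on R^2 becomes
   max(|Δs|, |Δt|), so open l^1 balls of radius r are open squares of side 2r.
   A finite set of diameter D therefore has its s- and t-ranges of length at
   most D, and the point whose coordinates are the midpoints of these ranges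
   lies within D/2 of every point of the set; for D = k this is < (k+1)/2.
   Conversely, a common point of the balls puts any two points at distance
   < k+1 by the triangle inequality, hence at integer distance <= k. *)

From Stdlib Require Import ZArith Reals List Lra Lia.
Open Scope R_scope.

Lemma dR_sym (p q : R * R) : dR p q = dR q p.
Proof.
  unfold dR; rewrite (Rabs_minus_sym (fst p)), (Rabs_minus_sym (snd p)).
  reflexivity.
Qed.

Lemma dR_triangle (p q r : R * R) : dR p r <= dR p q + dR q r.
Proof.
  unfold dR.
  pose proof (Rabs_triang (fst p - fst q) (fst q - fst r)).
  pose proof (Rabs_triang (snd p - snd q) (snd q - snd r)).
  replace (fst p - fst r) with (fst p - fst q + (fst q - fst r)) by ring.
  replace (snd p - snd r) with (snd p - snd q + (snd q - snd r)) by ring.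
  lra.
Qed.

Lemma dR_ZZtoRR (u v : Z * Z) : dR (ZZtoRR u) (ZZtoRR v) = IZR (dZ u v).
Proof.
  unfold dR, dZ, ZZtoRR; simpl.
  rewrite plus_IZR, !abs_IZR, !minus_IZR; reflexivity.
Qed.

Definition diag_sum (p : R * R) : R := fst p + snd p.
Definition diag_diff (p : R * R) : R := fst p - snd p.

Lemma Rabs_add_Rabs (x y : R) : Rabs x + Rabs y = Rmax (Rabs (x + y)) (Rabs (x - y)).
Proof. unfold Rmax, Rabs; repeat destruct Rcase_abs; destruct Rle_dec; lra. Qed.

Lemma dR_diag (p q : R * R) :
  dR p q = Rmax (Rabs (diag_sum p - diag_sum q)) (Rabs (diag_diff p - diag_diff q)).
Proof.
  unfold dR, diag_sum, diag_diff; rewrite Rabs_add_Rabs.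
  do 2 f_equal; ring.
Qed.

Lemma exists_argmax {A : Type} (f : A -> R) (l : list A) :
  l <> nil -> exists w, In w l /\ forall v, In v l -> f v <= f w.
Proof.
  induction l as [|a l IH]; intros Hne; [congruence|].
  destruct l as [|b l].
  - exists a; split; [now left|]. intros v [<-|[]]; lra.
  - destruct IH as [w [Hw Hmax]]; [discriminate|].
    destruct (Rle_dec (f a) (f w)).
    + exists w; split; [now right|]. intros v [<-|Hv]; auto; lra.
    + exists a; split; [now left|]. intros v [<-|Hv]; [lra|].
      specialize (Hmax v Hv); lra.
Qed.

Lemma exists_midpoint {A : Type} (f : A -> R) (l : list A) (D : R) :
  l <> nil -> (forall u v, In u l -> In v l -> f u - f v <= D) ->
  exists c, forall v, In v l -> Rabs (f v - c) <= D / 2.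
Proof.
  intros Hne Hrange.
  destruct (exists_argmax f l Hne) as [hi [Hhi Hmax]].
  destruct (exists_argmax (fun v => - f v) l Hne) as [lo [Hlo Hmin]].
  pose proof (Hrange hi lo Hhi Hlo).
  exists ((f hi + f lo) / 2); intros v Hv.
  specialize (Hmax v Hv); specialize (Hmin v Hv).
  apply Rabs_le; lra.
Qed.

Lemma exists_l1_center (l : list (R * R)) (D : R) :
  l <> nil -> (forall u v, In u l -> In v l -> dR u v <= D) ->
  exists p, forall v, In v l -> dR p v <= D / 2.
Proof.
  intros Hne Hdiam.
  assert (Hsum : forall u v, In u l -> In v l -> diag_sum u - diag_sum v <= D).
  { intros u v Hu Hv; specialize (Hdiam u v Hu Hv); rewrite dR_diag in Hdiam.
    pose proof (Rle_abs (diag_sum u - diag_sum v)).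
    pose proof (Rmax_l (Rabs (diag_sum u - diag_sum v)) (Rabs (diag_diff u - diag_diff v))).
    lra. }
  assert (Hdiff : forall u v, In u l -> In v l -> diag_diff u - diag_diff v <= D).
  { intros u v Hu Hv; specialize (Hdiam u v Hu Hv); rewrite dR_diag in Hdiam.
    pose proof (Rle_abs (diag_diff u - diag_diff v)).
    pose proof (Rmax_r (Rabs (diag_sum u - diag_sum v)) (Rabs (diag_diff u - diag_diff v))).
    lra. }
  destruct (exists_midpoint diag_sum l D Hne Hsum) as [a Ha].
  destruct (exists_midpoint diag_diff l D Hne Hdiff) as [b Hb].
  exists ((a + b) / 2, (a - b) / 2); intros v Hv.
  rewrite dR_sym, dR_diag; unfold diag_sum at 2, diag_diff at 2; simpl.
  replace ((a + b) / 2 + (a - b) / 2) with a by field.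
  replace ((a + b) / 2 - (a - b) / 2) with b by field.
  apply Rmax_lub; auto.
Qed.

Lemma IZR_le_INR_of_lt_succ (z : Z) (k : nat) : IZR z < INR k + 1 -> IZR z <= INR k.
Proof.
  rewrite INR_IZR_INZ, <- plus_IZR; intros Hlt.
  apply lt_IZR in Hlt; apply IZR_le; lia.
Qed.

Theorem corollary4p3 (k : nat) (sigma : list (Z * Z)) :
  sigma <> nil ->
  (is_VR_simplex (INR k) sigma <->
   exists p : R * R, forall v, In v sigma ->
     ballR2 (ZZtoRR v) ((INR k + 1) / 2) p).
Proof.
  intros Hne; split.
  - intros [_ Hdiam].
    destruct (exists_l1_center (map ZZtoRR sigma) (INR k)) as [p Hp].
    + now destruct sigma.
    + intros x y [u [<- Hu]]%in_map_iff [v [<- Hv]]%in_map_iff.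
      rewrite dR_ZZtoRR; auto.
    + exists p; intros v Hv; unfold ballR2.
      specialize (Hp _ (in_map ZZtoRR _ _ Hv)); lra.
  - intros [p Hp]; split; [exact Hne|]; intros u v Hu Hv.
    apply IZR_le_INR_of_lt_succ; rewrite <- dR_ZZtoRR.
    pose proof (dR_triangle (ZZtoRR u) p (ZZtoRR v)).
    pose proof (Hp u Hu) as Hpu; pose proof (Hp v Hv) as Hpv; unfold ballR2 in *.
    rewrite dR_sym in Hpu; lra.
Qed.
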